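(* Let $G=(V,E)$ be a finite bipartite graph and fix an edge $e=\{b,w\}$ with $b$ black and $w$ white. Let $G^e=G-e$ (delete the edge only) and $G'=G-\{b,w\}$ (delete both vertices and all incident edges). Then: (i) the channels in $\mathcal{C}_B(G)$ not containing $b$ are exactly the channels in $\mathcal{C}_B(G^e)$ not containing $b$; (ii) if there is a channel $B\in\mathcal{C}_B(G^e)$ with $b\in B$, then there is a bijection $\mathcal{C}_B(G)\to\mathcal{C}_B(G')$ which maps every channel not containing $b$ to itself.
   Context: A channel of a graph $H$ is a vertex set $C$ such that every vertex of $H$ is adjacent to an even number of vertices of $C$ (the empty set included). For a bipartite graph with black/white coloring, $\mathcal{C}_B(H)$ denotes the set of channels of $H$ consisting only of black vertices. *)

From mathcomp Require Import all_boot.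
Set Implicit Arguments. Unset Strict Implicit. Unset Printing Implicit Defensive.

(* A finite graph H is given by a vertex set V : {set T} (T a finType)
   together with an adjacency relation r : rel T (only its restriction to V
   matters). *)

Definition simple_graph (T : finType) (V : {set T}) (r : rel T) : Prop :=
  (forall x y, r x y = r y x) /\ (forall x, ~~ r x x) /\
  (forall x y, r x y -> (x \in V) && (y \in V)).

(* Bipartite with colouring col (true = black, false = white). *)
Definition bipartite_col (T : finType) (r : rel T) (col : T -> bool) : Prop :=
  forall x y, r x y -> col x != col y.

Definition channel (T : finType) (V : {set T}) (r : rel T) (C : {set T}) : bool :=
  (C \subset V) && [forall v in V, ~~ odd #|[set u in C | r v u]|].

Definition chanB (T : finType) (V : {set T}) (r : rel T) (col : T -> bool)
  : {set {set T}} :=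
  [set C : {set T} | channel V r C && [forall u in C, col u]].

Definition del_edge (T : finType) (r : rel T) (b w : T) : rel T :=
  fun x y => r x y && ~~ (((x == b) && (y == w)) || ((x == w) && (y == b))).

Definition del_verts_set (T : finType) (V : {set T}) (b w : T) : {set T} :=
  V :\ b :\ w.
Definition del_verts_rel (T : finType) (r : rel T) (b w : T) : rel T :=
  fun x y => r x y && (x != b) && (x != w) && (y != b) && (y != w).

From mathcomp Require Import all_boot.
Set Implicit Arguments. Unset Strict Implicit. Unset Printing Implicit Defensive.

(* Parities of neighbourhoods are additive under symmetric difference, so the
   black channels of a graph form an F_2-vector space.  Deleting the edge bw
   only changes the parity at w of the black sets containing b; hence a black
   channel B of G - e through b is, in G, odd exactly at w.  Adding B to the
   black channels of G that contain b removes b from them while keeping them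
   even everywhere except at b and w, which gives channels of G - {b,w}; the
   inverse adds B back to the channels of G - {b,w} that are odd at w. *)

Section SymmetricDifference.
Variable T : finType.
Implicit Types X Y : {set T}.

Definition symdiff X Y : {set T} := [set x | (x \in X) (+) (x \in Y)].

Lemma in_symdiff x X Y : (x \in symdiff X Y) = (x \in X) (+) (x \in Y).
Proof. by rewrite inE. Qed.

Lemma symdiffK Y : cancel (symdiff^~ Y) (symdiff^~ Y).
Proof. by move=> X; apply/setP=> x; rewrite !in_symdiff addbK. Qed.

Lemma symdiff_subU X Y : symdiff X Y \subset X :|: Y.
Proof. by apply/subsetP=> x; rewrite in_symdiff inE; case: (x \in X). Qed.

Lemma odd_card_symdiff X Y : odd #|symdiff X Y| = odd #|X| (+) odd #|Y|.
Proof.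
have -> : symdiff X Y = (X :|: Y) :\: (X :&: Y).
  by apply/setP=> x; rewrite !inE; case: (x \in X); case: (x \in Y).
have sIU : X :&: Y \subset X :|: Y := subset_trans (subsetIl X Y) (subsetUl X Y).
by rewrite cardsDS // oddB ?subset_leq_card // -oddD cardsUI oddD.
Qed.

End SymmetricDifference.

Section Channels.
Variable T : finType.
Implicit Types (V X C : {set T}) (r : rel T) (col : T -> bool).

Definition odd_adj r X v : bool := odd #|[set u in X | r v u]|.

Lemma channelE V r C :
  channel V r C = (C \subset V) && [forall v in V, ~~ odd_adj r C v].
Proof. by []. Qed.

Lemma chanBP V r col C :
  reflect [/\ C \subset V, [forall u in C, col u] & {in V, forall v, ~~ odd_adj r C v}]
          (C \in chanB V r col).
Proof.
rewrite inE channelE; apply: (iffP andP) => [[/andP[sCV /forall_inP evC] blkC] | [sCV blkC evC]].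
  by split.
by split=> //; rewrite sCV; apply/forall_inP.
Qed.

Lemma odd_adj_symdiff r X Y v :
  odd_adj r (symdiff X Y) v = odd_adj r X v (+) odd_adj r Y v.
Proof.
rewrite /odd_adj -odd_card_symdiff.
rewrite (_ : [set u in symdiff X Y | r v u]
             = symdiff [set u in X | r v u] [set u in Y | r v u]) //.
by apply/setP=> u; rewrite !inE; case: (r v u); rewrite ?andbT ?andbF.
Qed.

Lemma eq_in_odd_adj r1 r2 X v :
  {in X, forall u, r1 v u = r2 v u} -> odd_adj r1 X v = odd_adj r2 X v.
Proof.
move=> eq_r; rewrite /odd_adj (_ : [set u in X | r1 v u] = [set u in X | r2 v u]) //.
by apply/setP=> u; rewrite !inE; case uX: (u \in X); rewrite //= eq_r.
Qed.

Lemma odd_adj_col r col X v :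
  bipartite_col r col -> [forall u in X, col u] -> col v -> odd_adj r X v = false.
Proof.
move=> bip /forall_inP blkX col_v; rewrite /odd_adj.
suff -> : [set u in X | r v u] = set0 by rewrite cards0.
apply/setP=> u; rewrite !inE; apply/andP=> -[/blkX col_u /bip].
by rewrite col_u col_v.
Qed.

Lemma eq_in_channel V r1 r2 C : {in V &, r1 =2 r2} -> channel V r1 C = channel V r2 C.
Proof.
move=> eq_r; rewrite !channelE; case sCV: (C \subset V) => //=.
apply: eq_forallb_in => v vV; congr (~~ _); apply: eq_in_odd_adj => u uC.
by rewrite eq_r // (subsetP sCV).
Qed.

Lemma chanB_del_verts V r col b w :
  chanB (del_verts_set V b w) (del_verts_rel r b w) col = chanB (del_verts_set V b w) r col.
Proof.
apply/setP=> C; rewrite !inE (@eq_in_channel _ _ r) // => x y.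
by rewrite !inE /del_verts_rel => /and3P[-> -> _] /and3P[-> -> _]; rewrite !andbT.
Qed.

End Channels.

Section DeletedEdge.
Variables (T : finType) (V : {set T}) (r : rel T) (col : T -> bool) (b w : T).
Hypotheses (bip : bipartite_col r col) (r_wb : r w b) (col_b : col b) (col_w : ~~ col w).
Implicit Types (X C D : {set T}) (u v : T).

Let col_neq_w u : col u -> u != w.
Proof. by apply: contraTneq => ->. Qed.

Lemma odd_adj_del_edge X v : [forall u in X, col u] ->
  odd_adj (del_edge r b w) X v = odd_adj r X v (+) ((v == w) && (b \in X)).
Proof.
move=> /forall_inP blkX; have [-> | v_w] := eqVneq v w; last first.
  rewrite addbF; apply: eq_in_odd_adj => u uX.
  by rewrite /del_edge (negbTE v_w) (negbTE (col_neq_w (blkX u uX))) !andbF andbT.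
rewrite /odd_adj /del_edge.
have -> : [set u in X | r w u && ~~ ((w == b) && (u == w) || (w == w) && (u == b))]
          = [set u in X | r w u] :\ b.
  apply/setP=> u; rewrite !inE eq_sym (negbTE (col_neq_w col_b)) eqxx /=.
  by case: (u \in X); case: (u == b); rewrite ?andbF ?andbT.
by rewrite (cardsD1 b [set u in X | r w u]) !inE r_wb andbT oddD oddb /= addbAC addbb.
Qed.

Lemma chanB_del_edge C : b \notin C ->
  (C \in chanB V r col) = (C \in chanB V (del_edge r b w) col).
Proof.
move=> bC; rewrite !inE !channelE.
case: (boolP [forall u in C, col u]) => blkC; last by rewrite !andbF.
congr (_ && _ && _); apply: eq_forallb_in => v _.
by rewrite odd_adj_del_edge // (negbTE bC) andbF addbF.
Qed.

Hypothesis w_V : w \in V.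
Variable B : {set T}.
Hypotheses (B_chan : B \in chanB V (del_edge r b w) col) (b_B : b \in B).

Let V' := del_verts_set V b w.

Lemma odd_adj_B v : v \in V -> odd_adj r B v = (v == w).
Proof.
case/chanBP: B_chan => _ blkB evB vV.
by move: (evB v vV); rewrite odd_adj_del_edge // b_B andbT; case: odd_adj; case: (v == w).
Qed.

Lemma chanB_del_vertsP D :
  reflect [/\ D \subset V, b \notin D, [forall u in D, col u] &
              {in V, forall v, v != w -> ~~ odd_adj r D v}]
          (D \in chanB V' r col).
Proof.
apply: (iffP (chanBP _ _ _ _)) => [[sDV' blkD evD] | [sDV bD blkD evD]].
  have bD : b \notin D by apply/negP=> /(subsetP sDV'); rewrite !inE eqxx andbF.
  split=> //; first by apply: subset_trans sDV' _; apply/subsetP=> x /setD1P[_ /setD1P[]].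
  move=> v vV v_w; have [-> | v_b] := eqVneq v b; first by rewrite (odd_adj_col bip).
  by apply: evD; rewrite !inE v_w v_b.
split=> //; last by move=> v /setD1P[v_w /setD1P[_ vV]]; apply: evD.
apply/subsetP=> x xD; rewrite !inE (subsetP sDV) // andbT.
rewrite (col_neq_w (forall_inP blkD x xD)); apply: contraTneq xD => ->.
by rewrite bD.
Qed.

Definition to_del_verts C := if b \in C then symdiff C B else C.
Definition of_del_verts D := if odd_adj r D w then symdiff D B else D.

Let symdiffB_sub X : X \subset V -> symdiff X B \subset V.
Proof.
case/chanBP: B_chan => sBV _ _ sXV.
by apply: subset_trans (symdiff_subU X B) _; rewrite subUset sXV.
Qed.

Let symdiffB_col X : [forall u in X, col u] -> [forall u in symdiff X B, col u].
Proof.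
case/chanBP: B_chan => _ /forall_inP blkB _ /forall_inP blkX.
by apply/forall_inP=> u /(subsetP (symdiff_subU X B)) /setUP[/blkX | /blkB].
Qed.

Lemma to_del_verts_chanB C : C \in chanB V r col -> to_del_verts C \in chanB V' r col.
Proof.
case/chanBP=> sCV blkC evC; apply/chanB_del_vertsP; rewrite /to_del_verts.
case: ifP => bC; last by split=> //; [rewrite bC | move=> v vV _; apply: evC].
split; [exact: symdiffB_sub | by rewrite in_symdiff bC b_B | exact: symdiffB_col |].
by move=> v vV v_w; rewrite odd_adj_symdiff odd_adj_B // (negbTE v_w) addbF evC.
Qed.

Lemma of_del_verts_chanB D : D \in chanB V' r col -> of_del_verts D \in chanB V r col.
Proof.
case/chanB_del_vertsP=> sDV bD blkD evD; apply/chanBP; rewrite /of_del_verts.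
case: ifP => oddDw.
  split; [exact: symdiffB_sub | exact: symdiffB_col |].
  move=> v vV; rewrite odd_adj_symdiff odd_adj_B //.
  by have [-> | v_w] := eqVneq v w; [rewrite oddDw | rewrite addbF evD].
split=> // v vV; have [-> | v_w] := eqVneq v w; first by rewrite oddDw.
exact: evD.
Qed.

Lemma to_del_vertsK : {in chanB V r col, cancel to_del_verts of_del_verts}.
Proof.
move=> C /chanBP[_ _ evC]; rewrite /to_del_verts /of_del_verts.
case: (b \in C); last by rewrite (negbTE (evC w w_V)).
by rewrite odd_adj_symdiff odd_adj_B // eqxx (negbTE (evC w w_V)) symdiffK.
Qed.

Lemma of_del_vertsK : {in chanB V' r col, cancel of_del_verts to_del_verts}.
Proof.
move=> D /chanB_del_vertsP[_ bD _ _]; rewrite /of_del_verts /to_del_verts.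
case: (odd_adj r D w); last by rewrite (negbTE bD).
by rewrite in_symdiff (negbTE bD) b_B symdiffK.
Qed.

End DeletedEdge.

Theorem lemma5p4 (T : finType) (V : {set T}) (r : rel T) (col : T -> bool)
  (b w : T) :
  simple_graph V r -> bipartite_col r col ->
  r b w -> col b -> ~~ col w ->
  (forall C : {set T}, b \notin C ->
     (C \in chanB V r col) = (C \in chanB V (del_edge r b w) col)) /\
  ((exists2 B : {set T}, B \in chanB V (del_edge r b w) col & b \in B) ->
   exists f : {set T} -> {set T},
     [/\ (forall C, C \in chanB V r col ->
            f C \in chanB (del_verts_set V b w) (del_verts_rel r b w) col),
         {in chanB V r col &, injective f},
         (forall D, D \in chanB (del_verts_set V b w) (del_verts_rel r b w) col ->
            exists2 C, C \in chanB V r col & f C = D) &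
         (forall C, C \in chanB V r col -> b \notin C -> f C = C)]).
Proof.
move=> [r_sym [_ r_V]] bip r_bw col_b col_w.
have r_wb : r w b by rewrite r_sym.
have w_V : w \in V by case/andP: (r_V _ _ r_bw).
split=> [C | [B B_chan b_B]]; first exact: chanB_del_edge.
rewrite chanB_del_verts.
exists (to_del_verts b B); split.
- exact: to_del_verts_chanB.
- exact: can_in_inj (to_del_vertsK r_wb col_b col_w w_V B_chan b_B).
- move=> D D_chan; exists (of_del_verts r w B D).
    exact: of_del_verts_chanB D_chan.
  exact: of_del_vertsK D_chan.
- by move=> C _ bC; rewrite /to_del_verts (negbTE bC).
Qed.
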